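(* Let $\Gamma=M\mathbb{Z}^n$ be a lattice in $\mathbb{R}^n$ (or $\mathbb{C}^n$), $M$ invertible, and let $A$ be a dilation matrix for $\Gamma$. Then there exists an integer $\beta\ge1$ such that $A^\beta$ yields a radix representation of $\Gamma$ with digit set $D_\beta=A^\beta(F_\Gamma)\cap\Gamma$, where $F_\Gamma=M([-\tfrac12,\tfrac12)^n)$; i.e. every $x\in\Gamma$ equals $\sum_{j=0}^N A^{\beta j}d_j$ for some $N\ge0$ and $d_j\in D_\beta$.
   Context: An integer dilation matrix is an $n\times n$ matrix with integer entries all of whose eigenvalues $\lambda$ satisfy $|\lambda|>1$. A matrix $A$ is a dilation matrix for $\Gamma=M\mathbb{Z}^n$ if $M^{-1}AM$ is an integer dilation matrix. *)

(* The ambient field is an arbitrary numClosedFieldType C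
   (covers C^n; R^n is the special case of real M, A). *)
From HB Require Import structures.
From mathcomp Require Import all_boot all_order all_algebra.
Set Implicit Arguments. Unset Strict Implicit. Unset Printing Implicit Defensive.
Import Order.TTheory GRing.Theory Num.Theory.
Local Open Scope ring_scope.

Section Lattice.
Variables (C : numClosedFieldType) (n : nat).

Definition int_dilation_matrix (B : 'M[C]_n) : Prop :=
  (exists Z : 'M[int]_n, B = map_mx (fun z : int => z%:~R) Z) /\
  (forall lambda : C, eigenvalue B lambda -> 1 < `|lambda|).

Definition dilation_matrix_for (M A : 'M[C]_n) : Prop :=
  int_dilation_matrix (invmx M *m A *m M).

Definition in_lattice (M : 'M[C]_n) (x : 'cV[C]_n) : Prop :=
  exists z : 'cV[int]_n, x = M *m map_mx (fun k : int => k%:~R) z.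

Definition in_fund_dom (M : 'M[C]_n) (x : 'cV[C]_n) : Prop :=
  exists t : 'cV[C]_n,
    (forall i, t i 0 \is Num.real /\ - (2%:R)^-1 <= t i 0 /\ t i 0 < (2%:R)^-1)
    /\ x = M *m t.

Definition in_digit_set (M B : 'M[C]_n) (d : 'cV[C]_n) : Prop :=
  in_lattice M d /\ exists f, in_fund_dom M f /\ d = B *m f.

End Lattice.

From HB Require Import structures.
From mathcomp Require Import all_boot all_order all_algebra ring zify.
Set Implicit Arguments. Unset Strict Implicit. Unset Printing Implicit Defensive.
Import Order.TTheory GRing.Theory Num.Theory.
Local Open Scope ring_scope.

(* Conjugating by [M] reduces the statement to the integer matrix
   [B = M^-1 A M] acting on [Z^n].  All eigenvalues of [B^-1] lie in the open
   unit disc, so after a Schur triangularization and a diagonal rescaling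
   [B^-1] is similar to a matrix of sup-operator norm [< 1]; hence some power
   [T = B^-beta] has norm at most [1/4].  Rounding [T z] to the nearest
   integer vector [y] then gives [z = g + B^beta y] with [g] in
   [B^beta ([-1/2, 1/2)^n)] and [y] strictly smaller than [z] unless [y = 0],
   and iterating this division yields the expansion.  Since the field [C] need
   not be archimedean, every estimate is made with natural or rational
   constants, and the rounding is done in [Q]. *)

(** * Operator norm for the sup norm *)

Section MxNorm.
Variable R : numDomainType.

(* The sup-operator norm of [X] is its largest absolute row sum. *)
Definition mxnorm_le m n (X : 'M[R]_(m, n)) (c : R) :=
  forall i, \sum_j `|X i j| <= c.

Lemma mxnorm_le_trans m n (X : 'M[R]_(m, n)) a b :
  a <= b -> mxnorm_le X a -> mxnorm_le X b.
Proof. by move=> ab hX i; apply: le_trans (hX i) ab. Qed.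

Lemma mxnorm_leM m n p (X : 'M[R]_(m, n)) (Y : 'M[R]_(n, p)) a b :
  0 <= b -> mxnorm_le X a -> mxnorm_le Y b -> mxnorm_le (X *m Y) (a * b).
Proof.
move=> b0 hX hY i.
apply: le_trans (_ : \sum_j \sum_k `|X i k| * `|Y k j| <= _).
  apply: ler_sum => j _; rewrite mxE.
  by apply: le_trans (ler_norm_sum _ _ _) _; apply: ler_sum => k _; rewrite normrM.
rewrite exchange_big /=; apply: le_trans (_ : \sum_k `|X i k| * b <= _).
  by apply: ler_sum => k _; rewrite -mulr_sumr ler_wpM2l.
by rewrite -mulr_suml ler_wpM2r.
Qed.

Lemma diag_mxnorm_le n (d : 'rV[R]_n) b :
  (forall i, `|d 0 i| <= b) -> mxnorm_le (diag_mx d) b.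
Proof.
move=> hd i; rewrite (bigD1 i) //= big1 ?addr0; first by rewrite mxE eqxx mulr1n.
by move=> j /negbTE ji; rewrite mxE eq_sym ji mulr0n normr0.
Qed.

Lemma mxnorm_leX n (X : 'M[R]_n) a k :
  0 <= a -> mxnorm_le X a -> mxnorm_le (X ^+ k) (a ^+ k).
Proof.
move=> a0 hX; elim: k => [|k IHk].
  rewrite !expr0 -idmxE -diag_const_mx.
  by apply: diag_mxnorm_le => i; rewrite mxE normr1.
by rewrite !exprS; apply: mxnorm_leM; rewrite ?exprn_ge0.
Qed.

End MxNorm.

Lemma exists_nat_mxnorm_le (R : archiNumDomainType) m n (X : 'M[R]_(m, n)) :
  exists H : nat, mxnorm_le X H%:R.
Proof.
have row_ge0 i : 0 <= \sum_j `|X i j| by rewrite sumr_ge0.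
exists (Num.bound (\sum_i \sum_j `|X i j|)) => i.
apply: le_trans (ltW (archi_boundP _)); last exact: sumr_ge0.
by rewrite [X in _ <= X](bigD1 i) //= lerDl sumr_ge0.
Qed.

Lemma mxnorm_le_ratr (F : numFieldType) m n (X : 'M[rat]_(m, n)) b :
  mxnorm_le (map_mx (ratr : rat -> F) X) (ratr b) <-> mxnorm_le X b.
Proof.
have sumE i : \sum_j `|map_mx (ratr : rat -> F) X i j| = ratr (\sum_j `|X i j|).
  by rewrite rmorph_sum; apply: eq_bigr => j _; rewrite mxE -ratr_norm.
by split=> normX i; have := normX i; rewrite sumE ler_rat.
Qed.

Lemma bernoulli_le (R : numDomainType) (c : R) k :
  0 <= c -> 1 + k%:R * c <= (1 + c) ^+ k.
Proof.
move=> c0; elim: k => [|k IHk]; first by rewrite mul0r addr0 expr0.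
rewrite exprSr; apply: le_trans (_ : (1 + k%:R * c) * (1 + c) <= _); last first.
  by rewrite ler_wpM2r ?addr_ge0.
rewrite mulrDr mulr1 mulrDl mul1r -natr1 mulrDl mul1r -addrA lerD2l.
by rewrite addrA lerDl !mulr_ge0 ?ler0n.
Qed.

Lemma exprB_bernoulli_le1 (R : numDomainType) (c : R) k :
  0 <= c <= 1 -> (1 - c) ^+ k * (1 + k%:R * c) <= 1.
Proof.
case/andP=> c0 c1.
apply: le_trans (_ : (1 - c) ^+ k * (1 + c) ^+ k <= _).
  by rewrite ler_wpM2l ?bernoulli_le ?exprn_ge0 ?subr_ge0.
rewrite -exprMn mulrBl mul1r mulrDr mulr1 opprD addrA addrK -expr2.
by rewrite exprn_ile1 ?lerBlDr ?lerDl ?exprn_ge0 ?subr_ge0 ?expr_le1.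
Qed.

Lemma exp_decay_quarter (R : numFieldType) (q K : nat) : (0 < q)%N ->
  K%:R * (1 - q%:R^-1) ^+ ((4 * K).+1 * q) <= 4%:R^-1 :> R.
Proof.
move=> q0; set L := (4 * K).+1.
have q0' : (0 : R) < q%:R by rewrite ltr0n.
have := @exprB_bernoulli_le1 R q%:R^-1 (L * q).
rewrite invr_ge0 invf_le1 // ler0n ler1n natrM -mulrA mulfV ?gt_eqF // mulr1.
move=> /(_ q0) decay.
rewrite -[4%:R^-1]mulr1 ler_pdivlMl ?ltr0n // mulrA; apply: le_trans decay.
rewrite mulrC ler_wpM2l ?exprn_ge0 ?subr_ge0 ?invf_le1 ?ler1n //.
by rewrite -natrM addrC natr1 ler_nat; apply/ltnW/leqnSn.
Qed.

Lemma sqr_le1B_half (R : numFieldType) (x a : R) :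
  0 <= x -> 0 <= a <= 1 -> x ^+ 2 <= 1 - a -> x <= 1 - a / 2%:R.
Proof.
move=> x0 /andP[a0 a1] xa; rewrite -(@ler_pXn2r _ 2) // ?nnegrE //; last first.
  by rewrite subr_ge0 ler_pdivrMr ?ltr0n // mul1r (le_trans a1) // ler1n.
apply: le_trans xa _; rewrite sqrrB expr1n mul1r -mulr_natr mulrAC mulfK ?pnatr_eq0 //.
by rewrite lerDl exprn_ge0 ?divr_ge0.
Qed.

Lemma mulmx_conj_exp (R : comPzRingType) n (W W' V : 'M[R]_n) k :
  W *m W' = 1%:M -> (W' *m V *m W) ^+ k = W' *m V ^+ k *m W.
Proof.
move=> WW'; elim: k => [|k IHk]; first by rewrite !expr0 mulmx1 (mulmx1C WW').
rewrite exprS IHk -!mulmxE !mulmxA -(mulmxA (W' *m V) W W') WW' mulmx1.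
by rewrite exprS -mulmxE !mulmxA.
Qed.

Lemma mulmx_diag_expV (F : fieldType) n (a : F) : a != 0 ->
  diag_mx (\row_(i < n) a ^+ i) *m diag_mx (\row_i a^-1 ^+ i) = 1%:M.
Proof.
move=> a0; rewrite mulmx_diag -diag_const_mx; congr diag_mx; apply/rowP => i.
by rewrite !mxE -exprMn mulfV ?expr1n.
Qed.

Lemma map_mx_ratr_int (F : numFieldType) m n (Y : 'M[int]_(m, n)) :
  map_mx (ratr : rat -> F) (map_mx intr Y) = map_mx intr Y.
Proof. by apply/matrixP => i j; rewrite !mxE ratr_int. Qed.

Lemma eigenvalue_trig (F : fieldType) n (U : 'M[F]_n) i :
  is_trig_mx U -> eigenvalue U (U i i).
Proof.
move=> trigU; rewrite eigenvalue_root_char char_poly_trig //; apply/rootP.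
by rewrite horner_prod (bigD1 i) //= !hornerE subrr mul0r.
Qed.

Lemma eigenvalue_invmx (F : fieldType) n (B : 'M[F]_n) mu :
  B \in unitmx -> eigenvalue (invmx B) mu -> mu != 0 /\ eigenvalue B mu^-1.
Proof.
move=> Bu /eigenvalueP [v vB v0].
have mu0 : mu != 0.
  apply: contraNneq v0 => mu0.
  by rewrite -[v]mulmx1 -(mulVmx Bu) mulmxA vB mu0 scale0r mul0mx.
split=> //; apply/eigenvalueP; exists v => //.
have ev : v = mu *: (v *m B) by rewrite scalemxAl -vB -mulmxA mulVmx // mulmx1.
by rewrite {2}ev scalerA mulVf // scale1r.
Qed.

Lemma unitmx_eigenvalue_neq0 (F : fieldType) n (B : 'M[F]_n) :
  (forall l, eigenvalue B l -> l != 0) -> B \in unitmx.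
Proof.
move=> eig0; apply: contraT => Bnu; have /eig0 : eigenvalue B 0; last by rewrite eqxx.
rewrite eigenvalue_root_char /root horner_coef0 char_poly_det mulf_eq0.
by rewrite unitmxE unitfE negbK in Bnu; rewrite Bnu orbT.
Qed.

(** * Spectral radius below one gives a contracting power *)

(* Conjugating a triangular matrix by [diag (eps^i)] scales the entry [(i, j)]
   by [eps^(i - j)], so for small [eps] only the diagonal survives. *)
Lemma trig_scaled_rowsum_le (R : numFieldType) n (U : 'M[R]_n) (eps h : R) :
  0 < eps <= 1 -> is_trig_mx U -> mxnorm_le U h ->
  forall i, \sum_j `|(diag_mx (\row_k eps ^+ k) *m U *m
                       diag_mx (\row_k eps^-1 ^+ k)) i j| <= `|U i i| + eps * h.
Proof.
case/andP=> eps0 eps1 /is_trig_mxP trigU hU i.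
have eps_ge0 : 0 <= eps by rewrite ltW.
rewrite mul_mx_diag mul_diag_mx (bigD1 i) //=; apply: lerD.
  by rewrite !mxE mulrAC -exprMn mulfV ?gt_eqF // expr1n mul1r.
apply: le_trans (_ : \sum_(j | j != i) eps * `|U i j| <= _); last first.
  rewrite -mulr_sumr ler_wpM2l // (le_trans _ (hU i)) // [X in _ <= X](bigD1 i) //=.
  by rewrite lerDr.
apply: ler_sum => j ji; rewrite !mxE.
case: (ltngtP i j) => [ij | ji' | /val_inj ij]; last by rewrite ij eqxx in ji.
  by rewrite trigU // mulr0 mul0r normr0 mulr_ge0.
rewrite -(subnK (ltnW ji')) exprD mulrAC -(mulrA _ (eps ^+ j)) -exprMn.
rewrite mulfV ?gt_eqF // expr1n mulr1 normrM ger0_norm ?exprn_ge0 // ler_wpM2r //.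
by rewrite ler_iXnr // subn_gt0.
Qed.

Section Unitary.
Variable C : numClosedFieldType.

Lemma unitary_entry_le1 m n (P : 'M[C]_(m, n)) i j :
  P \is unitarymx -> `|P i j| <= 1.
Proof.
move=> /unitarymxP /matrixP /(_ i i); rewrite !mxE eqxx => unit_row.
have : \sum_k `|P i k| ^+ 2 = 1.
  by apply: etrans _ unit_row; apply: eq_bigr => k _; rewrite normCK !mxE.
rewrite (bigD1 j) //= => sum1.
by rewrite -(@expr_le1 _ 2) // -sum1 lerDl sumr_ge0 // => k _; rewrite exprn_ge0.
Qed.

Lemma unitary_mxnorm_le m n (P : 'M[C]_(m, n)) :
  P \is unitarymx -> mxnorm_le P n%:R.
Proof.
move=> uP i; apply: le_trans (_ : \sum_(j < n) (1 : C) <= _).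
  by apply: ler_sum => j _; apply: unitary_entry_le1.
by rewrite sumr_const card_ord.
Qed.

Lemma unitary_trigonalization n (T : 'M[C]_n) : (0 < n)%N ->
  exists P U, [/\ P \is unitarymx, is_trig_mx U, U = P *m T *m invmx P
                & forall i, eigenvalue T (U i i)].
Proof.
move=> n0; have [P uP] := Schur T n0.
have Pu := unitarymx_unit uP.
rewrite /similar_to /= conjymx // -invmx_unitary // => trigU.
exists P, (P *m T *m invmx P); split => // i.
apply: (eigenvalue_conjmx (stablemx_unit _ Pu)); first by rewrite row_free_unit.
by rewrite conjymx // -invmx_unitary //; apply: eigenvalue_trig.
Qed.

Lemma exists_contracting_similar n (T : 'M[C]_n) (q H : nat) :
  (0 < n)%N -> (0 < q)%N ->
  (forall mu, eigenvalue T mu -> `|mu| <= 1 - q%:R^-1 *+ 2) ->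
  mxnorm_le T H%:R ->
  exists (K : nat) (W W' V : 'M[C]_n), [/\ W *m W' = 1%:M, T = W' *m V *m W,
    mxnorm_le V (1 - q%:R^-1), mxnorm_le W K%:R & mxnorm_le W' K%:R].
Proof.
move=> n0 q0 eigT normT.
have [P [U [uP trigU eU eigU]]] := unitary_trigonalization T n0.
have Pu := unitarymx_unit uP.
have uP' : invmx P \is unitarymx by rewrite invmx_unitary // trmxC_unitary.
have normU : mxnorm_le U (n * H * n)%:R.
  rewrite eU !natrM; apply: mxnorm_leM => //; last exact: unitary_mxnorm_le.
  by apply: mxnorm_leM => //; apply: unitary_mxnorm_le.
pose e := (q * (n * H * n)).+1; pose eps : C := e%:R^-1.
have e0 : (0 : C) < e%:R by rewrite ltr0n.
have eps_gt0 : 0 < eps by rewrite invr_gt0.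
have eps_ge0 : 0 <= eps := ltW eps_gt0.
pose S := diag_mx (\row_(i < n) eps ^+ i); pose S' := diag_mx (\row_(i < n) eps^-1 ^+ i).
have SS' : S *m S' = 1%:M by apply: mulmx_diag_expV; rewrite gt_eqF.
have S'S : S' *m S = 1%:M.
  by rewrite /S' /S -[in X in _ *m X](invrK eps) mulmx_diag_expV ?invr_eq0 ?gt_eqF.
exists (n * e ^ n)%N, (S *m P), (invmx P *m S'), (S *m U *m S'); split.
- by rewrite mulmxA -(mulmxA S) mulmxV // mulmx1.
- rewrite !mulmxA -(mulmxA _ S' S) S'S mulmx1 -(mulmxA _ S' S) S'S mulmx1.
  by rewrite eU !mulmxA mulVmx // mul1mx -mulmxA mulVmx // mulmx1.
- move=> i; apply: le_trans (trig_scaled_rowsum_le _ trigU normU i) _.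
    by rewrite eps_gt0 invf_le1 // ler1n.
  apply: le_trans (lerD (eigT _ (eigU i)) (_ : eps * _ <= q%:R^-1)) _.
    rewrite mulrC ler_pdivrMr // ler_pdivlMl ?ltr0n // -natrM ler_nat.
    exact: leqnSn.
  by rewrite mulr2n opprD addrA subrK.
- apply: (@mxnorm_le_trans _ _ _ _ (1 * n%:R)).
    by rewrite mul1r natrM ler_peMr ?ler0n // natrX exprn_ege1 ?ler1n.
  apply: mxnorm_leM; [exact: ler0n | | exact: unitary_mxnorm_le].
  apply: diag_mxnorm_le => i; rewrite mxE ger0_norm ?exprn_ge0 //.
  by rewrite exprn_ile1 // invf_le1 // ler1n.
- rewrite natrM; apply: mxnorm_leM; first by rewrite ler0n.
    exact: unitary_mxnorm_le.
  apply: diag_mxnorm_le => i; rewrite mxE invrK ger0_norm ?exprn_ge0 //.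
  by rewrite natrX ler_weXn2l ?ler1n // ltnW.
Qed.
End Unitary.

Lemma exists_exp_mxnorm_le_quarter (C : numClosedFieldType) n (T : 'M[C]_n)
    (q H : nat) :
  (0 < q)%N -> (forall mu, eigenvalue T mu -> `|mu| <= 1 - q%:R^-1 *+ 2) ->
  mxnorm_le T H%:R ->
  exists beta, (0 < beta)%N /\ mxnorm_le (T ^+ beta) 4%:R^-1.
Proof.
case: (posnP n) => [n0 | n_gt0] q0 eigT normT.
  by exists 1%N; split=> // i; have := ltn_ord i; rewrite {2}n0.
have [K [W [W' [V [WW' eT normV normW normW']]]]] :=
  exists_contracting_similar n_gt0 q0 eigT normT.
have r0 : (0 : C) <= 1 - q%:R^-1 by rewrite subr_ge0 invf_le1 ?ltr0n ?ler1n.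
exists ((4 * (K * K)).+1 * q)%N; split; first by rewrite muln_gt0.
rewrite eT mulmx_conj_exp //.
apply: mxnorm_le_trans (mxnorm_leM _ (mxnorm_leM _ normW' (mxnorm_leX _ r0 normV)) normW);
  rewrite ?exprn_ge0 ?ler0n //.
by rewrite mulrAC -natrM exp_decay_quarter.
Qed.

(** * A spectral gap for integer matrices *)

Section IntegralBounds.
Variable C : numClosedFieldType.

(* Cauchy's bound: if [x] is small, [p.[x] - p`_0] is smaller than the nonzero
   integer [p`_0]. *)
Lemma root_int_poly_norm_lb (x : C) (p : {poly int}) :
  p`_0 != 0 -> root (map_poly intr p) x -> exists m : nat, m.+1%:R^-1 <= `|x|.
Proof.
move=> p00 /rootP px.
have [x1 | x1] := real_leP (real1 C) (normr_real x); first by exists 0%N; rewrite invr1.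
have sp : (0 < size p)%N.
  by rewrite lt0n size_poly_eq0; apply: contraNneq p00 => ->; rewrite coef0.
move: px; rewrite (@horner_coef_wide _ (size p)); last first.
  by rewrite size_map_inj_poly //; apply: intr_inj.
case: (size p) sp => // s _; rewrite big_ord_recl /= expr0 mulr1 coef_map /=.
move=> /eqP; rewrite addr_eq0 => /eqP p0E.
pose m : nat := (\sum_(i < s) absz (p`_(bump 0 i))%R)%N.
have norm_ge1 : 1 <= `|x| * m%:R.
  have : 1 <= `|(p`_0)%:~R : C| by rewrite -intr_norm ler1z -gtz0_ge1 normr_gt0.
  move/le_trans; apply; rewrite p0E normrN.
  apply: le_trans (ler_norm_sum _ _ _) _.
  rewrite /m natr_sum mulr_sumr; apply: ler_sum => i _.
  rewrite normrM coef_map /= -intr_norm -natr_absz mulrC ler_wpM2r //.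
  by rewrite normrX ler_iXnr // ltW.
exists m; rewrite -[_^-1]mulr1 ler_pdivrMl ?ltr0n // -natr1 mulrDl mul1r mulrC.
by apply: le_trans norm_ge1 _; rewrite lerDl.
Qed.

Lemma integral_norm_lb (x : C) : x != 0 -> integralOver intr x ->
  exists m : nat, m.+1%:R^-1 <= `|x|.
Proof.
move=> x0 [p p_monic px].
have [k [r r0 ep]] := multiplicity_XsubC p 0.
apply: (@root_int_poly_norm_lb _ r).
  by move: r0; rewrite monic_neq0 //= rootE horner_coef0.
move: px; rewrite ep rmorphM rmorphXn /= map_polyXsubC /root hornerM.
by rewrite horner_exp hornerXsubC rmorph0 subr0 mulf_eq0 expf_eq0 (negbTE x0) andbF orbF.
Qed.

Lemma integral_norm_gt1_gap (x : C) : integralOver intr x -> 1 < `|x| ->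
  exists m : nat, m.+1%:R^-1 <= `|x| ^+ 2 - 1.
Proof.
move=> ix x1; have x21 : 1 < `|x| ^+ 2 by rewrite exprn_egt1.
have ixc : integralOver intr x^*.
  have [p p_monic px] := integral_rmorph Num.conj ix.
  by exists p => //; rewrite -(eq_map_poly (fun z => rmorph_int Num.conj z)).
have ix21 : integralOver intr (`|x| ^+ 2 - 1).
  by rewrite normCK; apply: integral_sub; [exact: integral_mul | exact: integral1].
have [|m lb] := integral_norm_lb _ ix21; first by rewrite subr_eq0 gt_eqF.
by exists m; move: lb; rewrite ger0_norm // subr_ge0 ltW.
Qed.

Lemma eigenvalue_int_integral n (Z : 'M[int]_n) (l : C) :
  eigenvalue (map_mx intr Z) l -> integralOver intr l.
Proof.
move=> el; exists (char_poly Z); first exact: char_poly_monic.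
by rewrite map_char_poly -eigenvalue_root_char.
Qed.
End IntegralBounds.

Lemma exists_uniform_seq (T : eqType) (s : seq T) (P : nat -> T -> Prop) :
  (forall m m' x, (m <= m')%N -> P m x -> P m' x) ->
  (forall x, x \in s -> exists m, P m x) -> exists m, forall x, x \in s -> P m x.
Proof.
move=> Pmono; elim: s => [|y s IHs] Ps; first by exists 0%N.
have [my Py] := Ps y (mem_head _ _).
have [ms Pms] : exists m, forall x, x \in s -> P m x.
  by apply: IHs => x xs; apply: Ps; rewrite in_cons xs orbT.
exists (maxn my ms) => x; rewrite in_cons => /predU1P[-> | xs].
  by apply: Pmono Py; apply: leq_maxl.
by apply: Pmono (Pms _ xs); apply: leq_maxr.
Qed.

(* Outside an archimedean field [1 < |l|] alone gives no uniform gap; the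
   gap comes from [|l|^2 - 1] being a nonzero algebraic integer. *)
Lemma eigenvalue_norm_gap (C : numClosedFieldType) n (Z : 'M[int]_n) :
  (forall l : C, eigenvalue (map_mx intr Z) l -> 1 < `|l|) ->
  exists m : nat, forall l : C, eigenvalue (map_mx intr Z) l ->
    m.+1%:R^-1 <= `|l| ^+ 2 - 1.
Proof.
move=> eigZ; have [rs ers] := closed_field_poly_normal (char_poly (map_mx (intr : int -> C) Z)).
rewrite (monicP (char_poly_monic _)) scale1r in ers.
have rsE l : (l \in rs) = eigenvalue (map_mx intr Z) l.
  by rewrite eigenvalue_root_char ers root_prod_XsubC.
pose P m (l : C) := m.+1%:R^-1 <= `|l| ^+ 2 - 1.
have Pmono m m' l : (m <= m')%N -> P m l -> P m' l.
  by move=> mm'; apply: le_trans; rewrite lef_pV2 ?posrE ?ltr0n // ler_nat.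
have [|m Pm] := @exists_uniform_seq _ rs P Pmono.
  move=> l; rewrite rsE => el.
  exact: integral_norm_gt1_gap (eigenvalue_int_integral el) (eigZ l el).
by exists m => l; rewrite -rsE; apply: Pm.
Qed.

Lemma invmx_eigenvalue_norm_le (C : numClosedFieldType) n (B : 'M[C]_n) m :
  B \in unitmx -> (forall l, eigenvalue B l -> m.+1%:R^-1 <= `|l| ^+ 2 - 1) ->
  forall mu, eigenvalue (invmx B) mu -> `|mu| <= 1 - (4 * m.+2)%:R^-1 *+ 2.
Proof.
move=> Bu gapB mu /(eigenvalue_invmx Bu) [mu0 /gapB].
set a := `|mu| ^+ 2; rewrite normfV exprVn -/a lerBrDr => gap_mu.
have a0 : 0 < a by rewrite exprn_gt0 // normr_gt0.
have m0 : (0 : C) < m.+2%:R by rewrite ltr0n.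
have -> : (4 * m.+2)%:R^-1 *+ 2 = m.+2%:R^-1 / 2%:R :> C.
  by rewrite natrM; field; rewrite -(natrD _ 2) pnatr_eq0.
apply: sqr_le1B_half => //.
  by rewrite invr_ge0 ler0n invf_le1 // ler1n.
have -> : 1 - m.+2%:R^-1 = (m.+1%:R^-1 + 1)^-1 :> C.
  by field; rewrite -?(natrD _ 1) -?(natrD _ 2) ?pnatr_eq0.
rewrite -/a -[a]invrK lef_pV2 ?posrE ?invr_gt0 //.
by rewrite addr_gt0 ?invr_gt0 ?ltr0n.
Qed.

Lemma int_dilation_unitmx (C : numClosedFieldType) n (Z : 'M[int]_n) :
  (forall l : C, eigenvalue (map_mx intr Z) l -> 1 < `|l|) ->
  (map_mx intr Z : 'M[rat]_n) \in unitmx.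
Proof.
move=> eigZ; rewrite -(map_unitmx (ratr : {rmorphism rat -> C})) map_mx_ratr_int.
by apply: unitmx_eigenvalue_neq0 => l /eigZ l1; rewrite -normr_gt0 (lt_trans ltr01).
Qed.

Lemma int_dilation_contracting (C : numClosedFieldType) n (Z : 'M[int]_n) :
  (forall l : C, eigenvalue (map_mx intr Z) l -> 1 < `|l|) ->
  exists beta, (0 < beta)%N /\
    mxnorm_le (invmx (map_mx intr Z : 'M[rat]_n) ^+ beta) 4%:R^-1.
Proof.
move=> eigZ; have [m gapZ] := eigenvalue_norm_gap eigZ.
have ZCu : map_mx (intr : int -> C) Z \in unitmx.
  by rewrite -map_mx_ratr_int map_unitmx (int_dilation_unitmx eigZ).
set T := invmx (map_mx intr Z : 'M[rat]_n).
have eT : map_mx (ratr : rat -> C) T = invmx (map_mx intr Z) by rewrite map_invmx map_mx_ratr_int.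
have [H normT] := exists_nat_mxnorm_le T.
have normTC : mxnorm_le (invmx (map_mx (intr : int -> C) Z)) H%:R.
  by rewrite -eT -(ratr_nat C); apply/mxnorm_le_ratr.
have [beta [beta_gt0 normTb]] := exists_exp_mxnorm_le_quarter
  (isT : (0 < 4 * m.+2)%N) (invmx_eigenvalue_norm_le ZCu gapZ) normTC.
exists beta; split=> //; apply/(@mxnorm_le_ratr C).
by rewrite rmorphXn /= eT fmorphV rmorph_nat.
Qed.

(** * Division with remainder in the lattice *)

Definition half_box (R : numDomainType) n (f : 'cV[R]_n) : Prop :=
  forall i, - 2%:R^-1 <= f i 0 /\ f i 0 < 2%:R^-1.

Definition maxnorm n (z : 'cV[int]_n) : nat := (\max_(i < n) absz (z i 0)%R)%N.

Definition round_col n (w : 'cV[rat]_n) : 'cV[int]_n :=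
  \col_i Num.floor (w i 0 + 2%:R^-1).

Lemma half_box_sub_round n (w : 'cV[rat]_n) :
  half_box (w - map_mx intr (round_col w)).
Proof.
move=> i; rewrite !mxE; split; first by rewrite lerBrDl lerBlDr floor_le.
have half2 : (2%:R^-1 + 2%:R^-1 : rat) = 1 by apply/eqP.
rewrite ltrBlDl; have := floorD1_gt (w i 0 + 2%:R^-1).
by rewrite intrD -half2 addrA ltrD2r.
Qed.

Lemma round_col_small n (w : 'cV[rat]_n) (N : nat) :
  (forall i, `|w i 0| <= N%:R / 4%:R) ->
  round_col w = 0 \/ (maxnorm (round_col w) < N)%N.
Proof.
move=> wN.
have roundN i : (4 * absz (round_col w i 0)%R <= N + 2)%N.
  rewrite -(ler_nat rat) natrM natrD natr_absz intr_norm.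
  have -> : (round_col w i 0)%:~R = w i 0 - (w - map_mx intr (round_col w)) i 0.
    by rewrite !mxE opprB addrCA subrr addr0.
  apply: le_trans (ler_wpM2l _ (ler_normB _ _)) _ => //.
  rewrite mulrDr; apply: lerD; first by rewrite mulrC -ler_pdivlMr.
  have [lo hi] := half_box_sub_round w i.
  apply: le_trans (ler_wpM2l _ (_ : _ <= 2%:R^-1)) _ => //.
    by rewrite ler_norml lo ltW.
have [N0 | N_gt0] := posnP N.
  left; apply/matrixP => i j; rewrite ord1 [RHS]mxE; apply/eqP; rewrite -absz_eq0.
  by move: (roundN i); rewrite N0; case: (absz _) => // a; rewrite mulnS.
right; rewrite -(prednK N_gt0) ltnS; apply/bigmax_leqP => i _.
by have := roundN i; lia.
Qed.

Lemma maxnorm_col_le (R : numDomainType) n (z : 'cV[int]_n) :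
  mxnorm_le (map_mx intr z : 'cV[R]_n) (maxnorm z)%:R.
Proof.
move=> i; rewrite big_ord1 mxE -intr_norm -natr_absz ler_nat.
exact: (@leq_bigmax _ (fun i => absz (z i 0)%R)).
Qed.

Definition int_digit n (Zb : 'M[int]_n) (g : 'cV[int]_n) : Prop :=
  exists f : 'cV[rat]_n, half_box f /\ map_mx intr g = map_mx intr Zb *m f.

Lemma int_division_step n (Zb : 'M[int]_n) (Tq : 'M[rat]_n) :
  map_mx intr Zb *m Tq = 1%:M -> mxnorm_le Tq 4%:R^-1 ->
  forall z : 'cV[int]_n, exists y g,
    [/\ z = g + Zb *m y, int_digit Zb g & y = 0 \/ (maxnorm y < maxnorm z)%N].
Proof.
move=> ZT normT z; pose w := Tq *m map_mx intr z.
exists (round_col w), (z - Zb *m round_col w); split; first by rewrite subrK.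
  exists (w - map_mx intr (round_col w)); split; first exact: half_box_sub_round.
  by rewrite map_mxB map_mxM mulmxBr /w mulmxA ZT mul1mx.
apply: round_col_small => i.
have := mxnorm_leM (ler0n _ _) normT (maxnorm_col_le _ z) i.
by rewrite big_ord1 mulrC.
Qed.

Lemma radix_expansion n (Zb : 'M[int]_n) (P : 'cV[int]_n -> Prop) :
  (forall z, exists y g, [/\ z = g + Zb *m y, P g & y = 0 \/ (maxnorm y < maxnorm z)%N]) ->
  forall z, exists N (g : nat -> 'cV[int]_n),
    (forall j, (j <= N)%N -> P (g j)) /\ z = \sum_(j < N.+1) Zb ^+ j *m g j.
Proof.
move=> step z; elim: (maxnorm z).+1 {-2}z (ltnSn (maxnorm z)) => // s IHs {}z zs.
have [y [g [ez Pg [y0 | ys]]]] := step z.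
  exists 0%N, (fun _ => g); split=> [j _ // |].
  by rewrite big_ord1 expr0 mul1mx ez y0 mulmx0 addr0.
have [N [g' [Pg' ey]]] := IHs y (leq_trans ys zs).
exists N.+1, (fun j => if j is j'.+1 then g' j' else g); split=> [[|j] // jN|].
  exact: Pg'.
rewrite big_ord_recl /= expr0 mul1mx ez ey mulmx_sumr; congr (_ + _).
by apply: eq_bigr => j _; rewrite mulmxA exprS mulmxE.
Qed.

Lemma int_digit_in_digit_set (C : numClosedFieldType) n (M D : 'M[C]_n)
    (Zb : 'M[int]_n) (g : 'cV[int]_n) :
  M *m map_mx intr Zb = D *m M -> int_digit Zb g ->
  in_digit_set M D (M *m map_mx intr g).
Proof.
move=> MZ [f [boxf ef]]; split; first by exists g.
exists (M *m map_mx ratr f); split.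
  exists (map_mx ratr f); split=> // i; rewrite mxE.
  have [lo hi] := boxf i.
  have half : (2%:R^-1 : C) = ratr 2%:R^-1 by rewrite fmorphV rmorph_nat.
  rewrite half -rmorphN ler_rat ltr_rat lo hi; split=> //.
  by rewrite realE -(rmorph0 (ratr : {rmorphism rat -> C})) !ler_rat le_total.
rewrite mulmxA -MZ -mulmxA; congr (M *m _).
by rewrite -[LHS]map_mx_ratr_int ef map_mxM map_mx_ratr_int.
Qed.

Unset Implicit Arguments.
Theorem mainTheorem11 (C : numClosedFieldType) (n : nat) (M A : 'M[C]_n) :
  M \in unitmx -> dilation_matrix_for M A ->
  exists beta : nat, (1 <= beta)%N /\
    forall x : 'cV[C]_n, in_lattice M x ->
      exists (N : nat) (d : nat -> 'cV[C]_n),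
        (forall j, (j <= N)%N -> in_digit_set M (A ^+ beta) (d j)) /\
        x = \sum_(j < N.+1) (A ^+ (beta * j)) *m d j.
Proof.
move=> Mu [[Z eB] eigB]; rewrite eB in eigB.
have MZ k : M *m map_mx intr Z ^+ k = A ^+ k *m M.
  by rewrite -eB mulmx_conj_exp ?mulmxV // !mulmxA mulmxV // mul1mx.
have [beta [beta_gt0 normT]] := int_dilation_contracting eigB.
have ZT : map_mx intr (Z ^+ beta) *m invmx (map_mx intr Z) ^+ beta = 1%:M :> 'M[rat]_n.
  have Zu := int_dilation_unitmx eigB.
  by rewrite rmorphXn mulmxE -exprMn_comm /GRing.comm -mulmxE ?mulmxV ?mulVmx ?expr1n.
exists beta; split=> // _ [z ->].
have [N [g [digit_g ez]]] := radix_expansion (int_division_step ZT normT) z.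
exists N, (fun j => M *m map_mx intr (g j)); split.
  by move=> j jN; apply: int_digit_in_digit_set (digit_g j jN); rewrite rmorphXn MZ.
rewrite ez map_mx_sum mulmx_sumr; apply: eq_bigr => j _.
by rewrite map_mxM !rmorphXn /= -exprM !mulmxA MZ.
Qed.
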